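(* For every quotient-convergent sequence $(\varphi_n\colon n\in\mathbb{N})$ of finite setfunctions there is a setfunction $\varphi$ on the algebra $\mathcal{H}$ of clopen subsets of the Cantor set such that $\varphi_n\rightarrowtail\varphi$.
   Context: A setfunction on a set-algebra $(J,\mathcal{B})$ is a map $\varphi\colon\mathcal{B}\to\mathbb{R}$ with $\varphi(\emptyset)=0$; it is finite if $J$ is finite and $\mathcal{B}=2^J$. For $k\in\mathbb{N}$ and a map $F\colon J\to[k]$ with $F^{-1}(i)\in\mathcal{B}$ for all $i$, the quotient $\varphi\circ F^{-1}$ is $A\mapsto\varphi(F^{-1}(A))$ on $2^{[k]}$; $Q_k(\varphi)\subseteq\mathbb{R}^{2^k}$ is the set of all quotients of $\varphi$ on $[k]$. A sequence $(\varphi_n)$ is quotient-convergent if for every $k$ the sets $Q_k(\varphi_n)$ form a Cauchy sequence in the Hausdorff distance on $\mathbb{R}^{2^k}$; $\varphi_n\rightarrowtail\varphi$ means that for every $k$ the Hausdorff distance between $Q_k(\varphi_n)$ and $Q_k(\varphi)$ tends to $0$. *)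

From HB Require Import structures.
From mathcomp Require Import all_boot all_order all_algebra.
From mathcomp Require Import all_classical all_reals all_analysis.
Set Implicit Arguments. Unset Strict Implicit. Unset Printing Implicit Defensive.
Import Order.TTheory GRing.Theory Num.Theory.
Local Open Scope classical_set_scope.
Local Open Scope ring_scope.

(* A setfunction on a set-algebra (J, B): phi : set J -> R, where only the
   values on sets satisfying B matter, with phi set0 = 0. *)
Definition is_setfunction (R : realType) (J : Type) (phi : set J -> R) : Prop :=
  phi set0 = 0.

Definition vec (R : realType) (k : nat) := {set 'I_k} -> R.

Definition quotient_of (R : realType) (J : Type) (phi : set J -> R) (k : nat)
  (F : J -> 'I_k) : vec R k :=
  fun A => phi (F @^-1` [set i | i \in A]).

Definition Qk (R : realType) (J : Type) (B : set J -> Prop) (phi : set J -> R)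
  (k : nat) : set (vec R k) :=
  [set v | exists F : J -> 'I_k,
      (forall i : 'I_k, B (F @^-1` [set i])) /\ v = quotient_of phi F].

Definition vdist_le (R : realType) (k : nat) (v w : vec R k) (e : R) : Prop :=
  forall A : {set 'I_k}, `|v A - w A| <= e.

Definition hausdorff_le (R : realType) (k : nat) (X Y : set (vec R k)) (e : R)
  : Prop :=
  (forall v, X v -> exists2 w, Y w & vdist_le v w e) /\
  (forall w, Y w -> exists2 v, X v & vdist_le v w e).

Definition hausdorff_cauchy (R : realType) (k : nat) (X : nat -> set (vec R k))
  : Prop :=
  forall e : R, 0 < e -> exists N : nat, forall m n : nat,
    (N <= m)%N -> (N <= n)%N -> hausdorff_le (X m) (X n) e.

Definition hausdorff_cvg (R : realType) (k : nat) (X : nat -> set (vec R k))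
  (Y : set (vec R k)) : Prop :=
  forall e : R, 0 < e -> exists N : nat, forall n : nat,
    (N <= n)%N -> hausdorff_le (X n) Y e.

(* Finite setfunctions: J a finite type, B = 2^J. *)
Definition all_sets (J : Type) : set J -> Prop := fun _ => True.

Definition quotient_convergent (R : realType) (J : nat -> finType)
  (phi : forall n, set (J n) -> R) : Prop :=
  forall k : nat, (0 < k)%N -> @hausdorff_cauchy R k (fun n => @Qk R (J n) (@all_sets (J n)) (phi n) k).

Definition quotient_converges_to (R : realType) (J : nat -> finType)
  (phi : forall n, set (J n) -> R) (T : Type) (B : set T -> Prop)
  (psi : set T -> R) : Prop :=
  forall k : nat, (0 < k)%N -> @hausdorff_cvg R k (fun n => @Qk R (J n) (@all_sets (J n)) (phi n) k)
                                (@Qk R T B psi k).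

From HB Require Import structures.
From mathcomp Require Import all_boot all_order all_algebra.
From mathcomp Require Import all_classical all_reals all_analysis.
From mathcomp Require Import lra zify.
Set Implicit Arguments. Unset Strict Implicit. Unset Printing Implicit Defensive.
Import Order.TTheory GRing.Theory Num.Theory.
Import numFieldTopology.Exports.
Local Open Scope classical_set_scope.

(* Call a vector of Qlim k (the limits of quotients of phi_n on
   [k]) a limit quotient. Quotient convergence and the compactness of bounded
   boxes in R^{2^k} make Q_k(phi_n) converge to Qlim k in the Hausdorff
   distance. Two limit quotients always have a common refinement that is again
   a limit quotient: take limits of the quotients along the product partitions.
   Enumerating a countable dense family of limit quotients, we build a chain
   chi_0, chi_1, ... of limit quotients on [2^d_0], [2^d_1], ..., each one
   refining the previous one through truncation of binary codes and realizing
   the next dense target as a quotient. Reading [2^d] as the cylinders of depth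
   d of the Cantor set, the chain defines a setfunction on clopen sets whose
   quotients on [k] are exactly the quotients of the chi_j, which form a dense
   subset of Qlim k. *)

(** * Binary codes of prefixes in the Cantor space *)

Definition prefix_num d (x : cantor_space) : nat := \sum_(i < d) x i * 2 ^ i.

Lemma prefix_numS d x : prefix_num d.+1 x = prefix_num d x + x d * 2 ^ d.
Proof. by rewrite /prefix_num big_ord_recr. Qed.

Lemma prefix_num_lt d x : prefix_num d x < 2 ^ d.
Proof.
elim: d => [|d IH]; first by rewrite /prefix_num big_ord0.
by rewrite prefix_numS expnS; move: IH; case: (x d); rewrite ?mul1n ?mul0n; lia.
Qed.

Definition prefix_code d x : 'I_(2 ^ d) := Ordinal (prefix_num_lt d x).

Definition prefix_ball d (x : cantor_space) : set cantor_space :=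
  [set y | forall i, i < d -> y i = x i].

Lemma prefix_ballW d d' x : d <= d' -> prefix_ball d' x `<=` prefix_ball d x.
Proof. by move=> le_d y xy i lt_id; apply: xy (leq_trans lt_id le_d). Qed.

Lemma prefix_num_ball d x y : prefix_ball d x y -> prefix_num d y = prefix_num d x.
Proof. by move=> xy; apply: eq_bigr => i _; rewrite xy. Qed.

Lemma prefix_ball_num d x y : prefix_num d y = prefix_num d x -> prefix_ball d x y.
Proof.
elim: d => [|d IH] eq_num i //.
have [eq_num' eq_bit] : prefix_num d y = prefix_num d x /\ y d = x d.
  move: eq_num; rewrite !prefix_numS.
  have := prefix_num_lt d x; have := prefix_num_lt d y.
  by case: (x d); case: (y d) => /=; split=> //; lia.
by rewrite ltnS leq_eqVlt => /orP[/eqP -> // | /(IH eq_num')].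
Qed.

Lemma prefix_code_ball d x y : prefix_ball d x y -> prefix_code d y = prefix_code d x.
Proof. by move=> xy; apply: val_inj; apply: prefix_num_ball. Qed.

Lemma prefix_num_mod d d' x : d <= d' -> prefix_num d' x %% 2 ^ d = prefix_num d x.
Proof.
move=> /subnK <-; elim: (d' - d) => [|n IH].
  by rewrite add0n modn_small // prefix_num_lt.
rewrite addSn prefix_numS -modnDml IH.
have /dvdnP [q ->] : 2 ^ d %| x (n + d) * 2 ^ (n + d).
  by apply: dvdn_mull; rewrite expnD dvdn_mull.
by rewrite addnC modnMDl modn_small // prefix_num_lt.
Qed.

Lemma prefix_num_surj d r : r < 2 ^ d -> exists x, prefix_num d x = r.
Proof.
elim: d r => [|d IH] r lt_r.
  by exists (fun _ => false); rewrite /prefix_num big_ord0; move: lt_r; rewrite expn0; lia.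
have [x0 x0r] := IH (r %% 2 ^ d) (ltn_pmod _ (expn_gt0 2 d)).
exists (fun i => if i == d then r %/ 2 ^ d == 1 else x0 i).
rewrite prefix_numS eqxx (@prefix_num_ball _ x0); last first.
  by move=> i lt_id; rewrite ifN // ltn_eqF.
have : r %/ 2 ^ d < 2 by rewrite ltn_divLR ?expn_gt0 //; move: lt_r; rewrite expnS; lia.
by rewrite x0r; move: (divn_eq r (2 ^ d)); case: (r %/ 2 ^ d) => [|[|q]] //=; lia.
Qed.

Lemma prefix_code_surj d (r : 'I_(2 ^ d)) : exists x, prefix_code d x = r.
Proof. by have [x xr] := prefix_num_surj (ltn_ord r); exists x; apply: val_inj. Qed.

Lemma nbhs_prefix_ball d x : nbhs x (prefix_ball d x).
Proof.
have coord_nbhs (i : 'I_d) : nbhs x (fun y : cantor_space => y i = x i).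
  exact: (@proj_continuous nat (fun _ => bool) i x [set x i]).
apply: filterS (filter_forall _ coord_nbhs) => y xy i lt_id.
exact: (xy (Ordinal lt_id)).
Qed.

Lemma nbhs_prefix_ball_sub x (U : set cantor_space) :
  nbhs x U -> exists d, prefix_ball d x `<=` U.
Proof.
move=> Ux; apply/not_existsP => noball.
have out d : exists y, prefix_ball d x y /\ ~ U y.
  by have /existsNP [y /not_implyP] := noball d; exists y.
pose y d := projT1 (cid (out d)).
have [yx yU] : (forall d, prefix_ball d x (y d)) /\ (forall d, ~ U (y d)).
  by split => d; have [] := projT2 (cid (out d)).
have : y @ \oo --> x.
  apply/cvg_sup => i V [W] [[Z] _ <-] WxN WV; apply: (filterS WV).
  by exists i.+1 => // d /= lt_id; rewrite (yx d i lt_id).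
by move=> /(_ U Ux) [M _ /(_ M (leqnn M))]; apply: yU.
Qed.

Lemma prefix_ball_code d x y : prefix_code d y = prefix_code d x -> prefix_ball d x y.
Proof. by move/(congr1 val); apply: prefix_ball_num. Qed.

Lemma open_fibers_finite_depth k (F : cantor_space -> 'I_k) :
  (forall i, open (F @^-1` [set i])) ->
  exists D, forall x y, prefix_ball D x y -> F y = F x.
Proof.
move=> openF; apply/not_existsP => nodepth.
have bad D : exists xy : cantor_space * cantor_space,
    prefix_ball D xy.1 xy.2 /\ F xy.2 <> F xy.1.
  have /existsNP [x /existsNP [y /not_implyP [xy Fxy]]] := nodepth D.
  by exists (x, y).
pose xy D := projT1 (cid (bad D)).
have xyP D : prefix_ball D (xy D).1 (xy D).2 /\ F (xy D).2 <> F (xy D).1.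
  exact: projT2 (cid (bad D)).
have [z [_ clz]] := @cantor_space_compact ((fun D => (xy D).1) @ \oo) _ filterT.
have /nbhs_prefix_ball_sub [n Fz] : nbhs z (F @^-1` [set F z]).
  by apply: open_nbhs_nbhs; split => //; exact: openF.
have tail : ((fun D => (xy D).1) @ \oo) [set (xy D).1 | D in [set D | n <= D]].
  by exists n => // D /= leD; exists D.
have [_ [[D /= leD <-] zD]] := clz _ _ tail (nbhs_prefix_ball n z).
have F1 : F (xy D).1 = F z := Fz _ zD.
have F2 : F (xy D).2 = F z.
  apply: Fz => i lt_in; rewrite -(zD i lt_in).
  exact: (proj1 (xyP D)) (leq_trans lt_in leD).
by apply: (proj2 (xyP D)); rewrite F1 F2.
Qed.

Lemma open_fibers_factor_prefix k (F : cantor_space -> 'I_k) :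
  (forall i, open (F @^-1` [set i])) ->
  exists D, forall d, D <= d -> exists f : 'I_(2 ^ d) -> 'I_k, F =1 f \o prefix_code d.
Proof.
move=> /open_fibers_finite_depth [D FD]; exists D => d le_Dd.
exists (fun r => F (projT1 (cid (prefix_code_surj r)))) => x /=.
case: cid => y /prefix_ball_code xy /=.
by rewrite (FD x y) //; apply: prefix_ballW le_Dd _ xy.
Qed.

Definition cylinder d (T : {set 'I_(2 ^ d)}) : set cantor_space :=
  [set x | prefix_code d x \in T].

Lemma open_cylinder d (T : {set 'I_(2 ^ d)}) : open (cylinder T).
Proof.
rewrite openE => x Tx; apply: filterS (nbhs_prefix_ball d x) => y xy.
by rewrite /cylinder /= (prefix_code_ball xy).
Qed.

Lemma clopen_cylinder d (T : {set 'I_(2 ^ d)}) : clopen (cylinder T).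
Proof.
split; first exact: open_cylinder.
have -> : cylinder T = ~` cylinder (~: T).
  by apply/seteqP; split => x /=; rewrite /cylinder /= inE; case: (_ \in T).
by rewrite closedC; exact: open_cylinder.
Qed.

Lemma cylinder_inj d : injective (@cylinder d).
Proof.
move=> T1 T2 eqT; apply/setP => r; have [x <-] := prefix_code_surj r.
have := congr1 (fun S => S x) eqT; rewrite /cylinder /= => eqx.
by apply/idP/idP; rewrite eqx.
Qed.

Lemma preimage_prefix d k (f : 'I_(2 ^ d) -> 'I_k) (A : {set 'I_k}) :
  (f \o prefix_code d) @^-1` [set i | i \in A] = cylinder [set r | f r \in A].
Proof. by apply/seteqP; split => x; rewrite /cylinder /= inE. Qed.

Definition code_trunc d {d'} (r : 'I_(2 ^ d')) : 'I_(2 ^ d) :=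
  Ordinal (ltn_pmod r (expn_gt0 2 d)).

Lemma code_trunc_prefix d d' x : d <= d' -> code_trunc d (prefix_code d' x) = prefix_code d x.
Proof. by move=> le_d; apply: val_inj; rewrite /= prefix_num_mod. Qed.

Lemma code_trunc_comp d d' d'' (r : 'I_(2 ^ d'')) : d <= d' ->
  code_trunc d (code_trunc d' r) = code_trunc d r.
Proof. by move=> le_d; apply: val_inj; rewrite /= modn_dvdm // dvdn_exp2l. Qed.

Lemma code_trunc_id d (r : 'I_(2 ^ d)) : code_trunc d r = r.
Proof. by apply: val_inj; rewrite /= modn_small. Qed.

Lemma cylinder_trunc d d' (T : {set 'I_(2 ^ d)}) : d <= d' ->
  cylinder T = cylinder [set r : 'I_(2 ^ d') | code_trunc d r \in T].
Proof. by move=> le_d; apply/seteqP; split => x; rewrite /cylinder /= inE code_trunc_prefix. Qed.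

(** * Vectors indexed by the subsets of [k] *)

Local Open Scope ring_scope.

Local Notation vec_space R k := (prod_topology (fun _ : {set 'I_k} => R)).

Section Vectors.
Variable R : realType.
Implicit Types (e : R) (k m : nat).

Lemma vdist_sym k (v w : vec R k) e : vdist_le v w e -> vdist_le w v e.
Proof. by move=> vw A; rewrite distrC. Qed.

Lemma vdist_trans k (u v w : vec R k) e1 e2 :
  vdist_le u v e1 -> vdist_le v w e2 -> vdist_le u w (e1 + e2).
Proof. by move=> uv vw A; apply: le_trans (ler_distD (v A) _ _) (lerD (uv A) (vw A)). Qed.

Lemma vdist_half k (u v w : vec R k) e :
  vdist_le u v (e / 2) -> vdist_le v w (e / 2) -> vdist_le u w e.
Proof. by move=> uv vw; rewrite [e]splitr; apply: vdist_trans uv vw. Qed.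

Lemma vdist_leW k (v w : vec R k) e1 e2 :
  e1 <= e2 -> vdist_le v w e1 -> vdist_le v w e2.
Proof. by move=> le_e vw A; apply: le_trans (vw A) le_e. Qed.

Lemma vdist_le0 k (v w : vec R k) : (forall e, 0 < e -> vdist_le v w e) -> v = w.
Proof.
move=> vw; apply/funext => A; apply/eqP; rewrite -subr_eq0 -normr_le0.
by apply/ler_addgt0Pr => e e_gt0; rewrite add0r; apply: vw.
Qed.

Definition vquot m k (g : 'I_m -> 'I_k) (v : vec R m) : vec R k :=
  fun A => v [set i | g i \in A]%SET.

Lemma eq_vquot m k (f g : 'I_m -> 'I_k) v : f =1 g -> vquot f v = vquot g v.
Proof. by move=> fg; apply/funext => A; congr (v _); apply/setP => i; rewrite !inE fg. Qed.

Lemma vquot_id m (v : vec R m) : vquot id v = v.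
Proof. by apply/funext => A; congr (v _); apply/setP => i; rewrite !inE. Qed.

Lemma vquot_comp m k l (f : 'I_m -> 'I_k) (g : 'I_k -> 'I_l) v :
  vquot g (vquot f v) = vquot (g \o f) v.
Proof. by apply/funext => A; congr (v _); apply/setP => i; rewrite !inE. Qed.

Lemma vdist_vquot m k (g : 'I_m -> 'I_k) v w e :
  vdist_le v w e -> vdist_le (vquot g v) (vquot g w) e.
Proof. by move=> vw A; apply: vw. Qed.

Definition l1dist k (v w : vec R k) : R := \sum_A `|v A - w A|.

Lemma vdist_l1dist k (v w : vec R k) : vdist_le v w (l1dist v w).
Proof.
move=> A; rewrite /l1dist (bigD1 A) //= lerDl.
by apply: sumr_ge0 => *; exact: normr_ge0.
Qed.

Lemma l1dist_le k (v w : vec R k) e :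
  vdist_le v w e -> l1dist v w <= e *+ #|{: {set 'I_k}}|.
Proof. by move=> vw; rewrite -sumr_const; apply: ler_sum => A _; exact: vw. Qed.

Lemma nbhs_vdist_lt k (v : vec R k) e : 0 < e ->
  nbhs (v : vec_space R k) (fun w : vec_space R k => forall A, `|w A - v A| < e).
Proof.
move=> e_gt0.
have := @filter_forall (vec_space R k) _ (fun A (w : vec_space R k) => `|w A - v A| < e)
  (nbhs (v : vec_space R k)) _.
apply => A.
have vA := @proj_continuous _ (fun _ : {set 'I_k} => R) A v _ (nbhsx_ballx (v A) e e_gt0).
apply: (@filterS _ (nbhs (v : vec_space R k)) _ _ _ _ vA) => w.
by rewrite /proj /= -ball_normE /ball_ /= distrC.
Qed.

Lemma natS_inv_le e : 0 < e -> exists r : nat, r.+1%:R^-1 <= e.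
Proof.
move=> e_gt0; exists (Num.Def.truncn e^-1).
rewrite -[e in _ <= e]invrK lef_pV2 ?posrE ?invr_gt0 ?ltr0Sn //.
exact/ltW/truncnS_gt.
Qed.

End Vectors.

(** * Limit quotients *)

Section LimitQuotients.
Local Unset Implicit Arguments.
Variables (R : realType) (J : nat -> finType) (phi : forall n, set (J n) -> R).
Local Set Implicit Arguments.
Hypothesis phi0 : forall n, is_setfunction (phi n).
Hypothesis phi_qc : quotient_convergent phi.

Definition quot n k (F : J n -> 'I_k) : vec R k := quotient_of (phi n) F.

Lemma eq_quot n k (F G : J n -> 'I_k) : F =1 G -> quot F = quot G.
Proof. by move=> FG; apply/funext => A; congr (phi n _); apply/funext => x; rewrite /= FG. Qed.

Lemma quot_comp n m k (g : 'I_m -> 'I_k) (F : J n -> 'I_m) :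
  quot (g \o F) = vquot g (quot F).
Proof. by apply/funext => A; congr (phi n _); apply/funext => x; rewrite /= inE. Qed.

Lemma QkP n k v :
  @Qk R (J n) (@all_sets (J n)) (phi n) k v <-> exists F : J n -> 'I_k, v = quot F.
Proof. by split=> [[F [_ ->]]|[F ->]]; exists F. Qed.

Lemma quot_cauchy k : (0 < k)%N -> forall e : R, 0 < e -> exists N, forall m n,
  (N <= m)%N -> (N <= n)%N ->
  forall F : J m -> 'I_k, exists G : J n -> 'I_k, vdist_le (quot F) (quot G) e.
Proof.
move=> k_gt0 e e_gt0; have [N QN] := phi_qc k_gt0 e_gt0.
exists N => m n leNm leNn F; have [Qmn _] := QN _ _ leNm leNn.
have [|_ /QkP [G ->] FG] := Qmn (quot F); first by apply/QkP; exists F.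
by exists G.
Qed.

Lemma quot_bounded k : (0 < k)%N -> exists N (B : R), forall n, (N <= n)%N ->
  forall (F : J n -> 'I_k) A, `|quot F A| <= B.
Proof.
move=> k_gt0; have [N QN] := quot_cauchy k_gt0 ltr01.
exists N, (\sum_(S : {set J N}) `|phi N [set x | x \in S]| + 1) => n leNn F A.
have [G FG] := QN n N leNn (leqnn N) F.
have GA_le : `|quot G A| <= \sum_(S : {set J N}) `|phi N [set x | x \in S]|.
  have -> : quot G A = phi N [set x | x \in [set x | G x \in A]%SET].
    by congr (phi N _); apply/funext => x; rewrite /= inE.
  rewrite (bigD1 [set x | G x \in A]%SET) //= lerDl.
  by apply: sumr_ge0 => *; exact: normr_ge0.
have := FG A; have := ler_distD (quot G A) (quot F A) 0; rewrite !subr0.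
by move: GA_le; lra.
Qed.

(* [Qlim k] is the Hausdorff limit of the sets Q_k(phi_n): see
   [quot_near_Qlim] and [Qlim_unif]. *)
Definition Qlim k : set (vec R k) := [set v | forall e, 0 < e -> exists N, forall n,
  (N <= n)%N -> exists F : J n -> 'I_k, vdist_le (quot F) v e].

Definition quot_cvg k (F : forall n, J n -> 'I_k) (v : vec R k) :=
  forall e, 0 < e -> exists N, forall n, (N <= n)%N -> vdist_le (quot (F n)) v e.

Definition quot_cluster k (F : forall n, J n -> 'I_k) (v : vec R k) :=
  forall e, 0 < e -> forall N, exists2 n, (N <= n)%N & vdist_le (quot (F n)) v e.

Lemma Qlim_vquot m k (g : 'I_m -> 'I_k) v : Qlim v -> Qlim (vquot g v).
Proof.
move=> Qv e e_gt0; have [N QN] := Qv e e_gt0; exists N => n leNn.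
by have [F Fv] := QN n leNn; exists (g \o F); rewrite quot_comp; exact: vdist_vquot.
Qed.

Lemma Qlim_set0 k (v : vec R k) : Qlim v -> v finset.set0 = 0.
Proof.
move=> Qv; apply/eqP; rewrite -normr_le0; apply/ler_addgt0Pr => e e_gt0.
have [N QN] := Qv e e_gt0; have [F /(_ finset.set0)] := QN N (leqnn N).
have -> : quot F finset.set0 = 0.
  rewrite -(phi0 N); congr (phi N _).
  by apply/seteqP; split => x //=; rewrite inE.
by rewrite sub0r normrN add0r.
Qed.

Lemma exists_quot_cluster k (F : forall n, J n -> 'I_k) :
  (0 < k)%N -> exists v, quot_cluster F v.
Proof.
move=> k_gt0; have [N [B QB]] := quot_bounded k_gt0.
pose u n : vec_space R k := quot (F n).
have [|v [_ clv]] := @tychonoff _ (fun _ : {set 'I_k} => R) (fun _ => `[-B, B]%classic)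
  (fun _ => @segment_compact R (-B) B) (u @ \oo) _.
  by exists N => // n /= leNn A; rewrite /= in_itv /= -ler_norml; exact: QB.
exists v => e e_gt0 M.
have tail : (u @ \oo) [set u n | n in [set n | (M <= n)%N]].
  by exists M => // n /= leMn; exists n.
have [_ [[n /= leMn <-] uv]] := clv _ _ tail (nbhs_vdist_lt v e_gt0).
by exists n => // A; apply/ltW/uv.
Qed.

Lemma quot_cluster_Qlim k (F : forall n, J n -> 'I_k) v :
  (0 < k)%N -> quot_cluster F v -> Qlim v.
Proof.
move=> k_gt0 clv e e_gt0; have e2_gt0 : 0 < e / 2 by rewrite divr_gt0.
have [N QN] := quot_cauchy k_gt0 e2_gt0; have [m leNm Fmv] := clv _ e2_gt0 N.
exists N => n leNn; have [G FG] := QN m n leNm leNn (F m).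
by exists G; apply: vdist_half (vdist_sym FG) Fmv.
Qed.

Lemma exists_Qlim k : (0 < k)%N -> exists v : vec R k, Qlim v.
Proof.
move=> k_gt0; have [v clv] := exists_quot_cluster (fun n (_ : J n) => Ordinal k_gt0) k_gt0.
by exists v; apply: quot_cluster_Qlim clv.
Qed.

Lemma Qlim_quot_cvg k (v : vec R k) :
  (0 < k)%N -> Qlim v -> exists F : forall n, J n -> 'I_k, quot_cvg F v.
Proof.
move=> k_gt0 Qv; pose F0 n : {ffun J n -> 'I_k} := [ffun => Ordinal k_gt0].
exists (fun n => [arg min_(G < F0 n) l1dist (quot G) v]%O : J n -> 'I_k) => e e_gt0.
pose c := #|{: {set 'I_k}}|.
have c_gt0 : 0 < c%:R :> R by rewrite ltr0n; apply/card_gt0P; exists finset.set0.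
have [N QN] := Qv (e / c%:R) (divr_gt0 e_gt0 c_gt0).
exists N => n leNn; have [G Gv] := QN n leNn.
case: arg_minP => // H _ /(_ (finfun G) isT) minH.
apply: vdist_leW (vdist_l1dist _ _); apply: le_trans minH _.
rewrite (eq_quot (G := G)); last by move=> x; rewrite ffunE.
apply: le_trans (l1dist_le Gv) _.
by rewrite -/c -(mulr_natr (e / c%:R)) divfK // gt_eqF.
Qed.

Lemma Qlim_unif k : (0 < k)%N -> forall e, 0 < e -> exists N, forall v : vec R k,
  Qlim v -> forall n, (N <= n)%N -> exists F : J n -> 'I_k, vdist_le (quot F) v e.
Proof.
move=> k_gt0 e e_gt0; have e2_gt0 : 0 < e / 2 by rewrite divr_gt0.
have [N QN] := quot_cauchy k_gt0 e2_gt0; exists N => v Qv n leNn.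
have [N1 QN1] := Qv _ e2_gt0; have [F Fv] := QN1 (maxn N N1) (leq_maxr _ _).
have [G FG] := QN (maxn N N1) n (leq_maxl _ _) leNn F.
by exists G; apply: vdist_half (vdist_sym FG) Fv.
Qed.

Lemma quot_near_Qlim k : (0 < k)%N -> forall e, 0 < e -> exists N, forall n,
  (N <= n)%N -> forall F : J n -> 'I_k, exists2 v, Qlim v & vdist_le (quot F) v e.
Proof.
move=> k_gt0 e e_gt0; have e2_gt0 : 0 < e / 2 by rewrite divr_gt0.
have [N QN] := quot_cauchy k_gt0 e2_gt0; exists N => n leNn F.
have nearF m : exists G : J m -> 'I_k,
    (N <= m)%N -> vdist_le (quot F) (quot G) (e / 2).
  have [leNm|_] := leqP N m; last by exists (fun _ => Ordinal k_gt0).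
  by have [G FG] := QN n m leNn leNm F; exists G.
pose G m := projT1 (cid (nearF m)).
have [v clv] := exists_quot_cluster G k_gt0.
exists v; first exact: quot_cluster_Qlim clv.
have [m leNm Gmv] := clv _ e2_gt0 N.
exact: vdist_half (projT2 (cid (nearF m)) leNm) Gmv.
Qed.

Lemma vquot_quot_cluster m M (pi : 'I_M -> 'I_m)
    (E : forall n, J n -> 'I_M) (F : forall n, J n -> 'I_m) v w :
  (forall n, pi \o E n =1 F n) -> quot_cvg F w -> quot_cluster E v -> vquot pi v = w.
Proof.
move=> piE Fw clv; apply: vdist_le0 => e e_gt0.
have e2_gt0 : 0 < e / 2 by rewrite divr_gt0.
have [N FN] := Fw _ e2_gt0; have [n leNn Env] := clv _ e2_gt0 N.
have := vdist_vquot pi (vdist_sym Env); rewrite -quot_comp (eq_quot (piE n)) => vFn.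
exact: vdist_half vFn (FN n leNn).
Qed.

Lemma Qlim_joint m M k (pi : 'I_M -> 'I_m) (h : 'I_M -> 'I_k) (c : 'I_m -> 'I_k -> 'I_M) :
  (0 < m)%N -> (0 < k)%N -> (0 < M)%N ->
  (forall a b, pi (c a b) = a) -> (forall a b, h (c a b) = b) ->
  forall (v : vec R m) (w : vec R k), Qlim v -> Qlim w ->
  exists x : vec R M, [/\ Qlim x, vquot pi x = v & vquot h x = w].
Proof.
move=> m_gt0 k_gt0 M_gt0 pic hc v w Qv Qw.
have [F Fv] := Qlim_quot_cvg m_gt0 Qv; have [G Gw] := Qlim_quot_cvg k_gt0 Qw.
pose E n (j : J n) := c (F n j) (G n j).
have [x clx] := exists_quot_cluster E M_gt0.
exists x; split; first exact: quot_cluster_Qlim clx.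
- by apply: vquot_quot_cluster Fv clx => n j; rewrite /= pic.
- by apply: vquot_quot_cluster Gw clx => n j; rewrite /= hc.
Qed.

Lemma Qlim_extend d k (v : vec R (2 ^ d)) (w : vec R k) :
  (0 < k)%N -> Qlim v -> Qlim w ->
  exists x : vec R (2 ^ (d + k)), [/\ Qlim x, vquot (code_trunc d) x = v &
    exists h : 'I_(2 ^ (d + k)) -> 'I_k, vquot h x = w].
Proof.
move=> k_gt0 Qv Qw.
have lt_pair (a : 'I_(2 ^ d)) (b : 'I_k) : (a + 2 ^ d * b < 2 ^ (d + k))%N.
  have := ltn_ord a; have := ltn_ord b; have := ltn_expl k (ltnSn 1).
  rewrite expnD; set p := (2 ^ d)%N; set q := (2 ^ k)%N => kq bk ap.
  have : (p * b.+1 <= p * q)%N by rewrite leq_mul2l; apply/orP; right; lia.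
  lia.
pose c a b : 'I_(2 ^ (d + k)) := Ordinal (lt_pair a b).
(* The code a + 2^d b truncates to a and remembers the label b. *)
pose h (r : 'I_(2 ^ (d + k))) : 'I_k := Ordinal (ltn_pmod (r %/ 2 ^ d) k_gt0).
have [||x [Qx xv xw]] := Qlim_joint (expn_gt0 2 d) k_gt0 (expn_gt0 2 (d + k))
  (pi := code_trunc d) (h := h) (c := c) _ _ Qv Qw.
- by move=> a b; apply: val_inj; rewrite /= mulnC addnC modnMDl modn_small.
- move=> a b; apply: val_inj => /=.
  by rewrite mulnC addnC divnMDl ?expn_gt0 // divn_small // addn0 modn_small.
by exists x; split => //; exists h.
Qed.

(** * A dense chain of limit quotients *)

(* The countably many indices (k, r, n, F) each propose a limit quotient on [k]
   within 1/(r+1) of quot F; [target_dense] shows that the proposals are dense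
   in every Qlim k. *)
Definition target (j : nat) : option {k : nat & vec R k} :=
  if @pickle_inv (nat * nat * nat * nat)%type j is Some (k, r, n, i) then
    if @pickle_inv {ffun J n -> 'I_k} i is Some F then
      if pselect (exists v, [/\ (0 < k)%N, Qlim v & vdist_le (quot F) v r.+1%:R^-1])
        is left ex then Some (existT _ k (projT1 (cid ex))) else None
    else None
  else None.

Lemma target_Qlim j p : target j = Some p -> (0 < projT1 p)%N /\ Qlim (projT2 p).
Proof.
rewrite /target; case: pickle_inv => [[[[k r] n] i]|] //.
case: pickle_inv => [F|] //; case: pselect => // ex [<-] /=.
by case: (projT2 (cid ex)).
Qed.

Lemma target_dense k (v : vec R k) e : (0 < k)%N -> Qlim v -> 0 < e ->
  exists j x, target j = Some (existT _ k x) /\ vdist_le x v e.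
Proof.
move=> k_gt0 Qv e_gt0; have e2_gt0 : 0 < e / 2 by rewrite divr_gt0.
have [r re] := natS_inv_le e2_gt0.
have r_gt0 : 0 < r.+1%:R^-1 :> R by rewrite invr_gt0 ltr0Sn.
have [N1 QN1] := quot_near_Qlim k_gt0 r_gt0.
have [N2 QN2] := Qv _ e2_gt0; pose n := maxn N1 N2.
have [F Fv] := QN2 n (leq_maxr _ _).
have qF : quot (finfun F) = quot F by apply: eq_quot => x; rewrite ffunE.
have ex : exists x, [/\ (0 < k)%N, Qlim x & vdist_le (quot (finfun F)) x r.+1%:R^-1].
  by have [x Qx Fx] := QN1 n (leq_maxl _ _) F; exists x; rewrite qF.
exists (pickle (k, r, n, pickle (finfun F))), (projT1 (cid ex)).
rewrite /target !pickleK_inv; case: pselect => [ex'|//].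
rewrite (Prop_irrelevance ex' ex); split=> //.
case: (projT2 (cid ex)) => _ _ Fx; rewrite -qF in Fv.
exact: vdist_half (vdist_leW re (vdist_sym Fx)) Fv.
Qed.

Definition stage := {d : nat & {v : vec R (2 ^ d) | Qlim v}}.

Definition depth (a : stage) : nat := projT1 a.
Definition stage_vec (a : stage) : vec R (2 ^ depth a) := proj1_sig (projT2 a).
Arguments stage_vec : clear implicits.

Definition refines (a b : stage) :=
  (depth a < depth b)%N /\ vquot (code_trunc (depth a)) (stage_vec b) = stage_vec a.

Definition covers (b : stage) (p : {k : nat & vec R k}) :=
  exists h : 'I_(2 ^ depth b) -> 'I_(projT1 p), vquot h (stage_vec b) = projT2 p.

Lemma exists_next_stage j (a : stage) :
  exists b, refines a b /\ forall p, target j = Some p -> covers b p.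
Proof.
case: a => d [v Qv]; rewrite /refines /covers /depth /stage_vec /=.
have [p [p_gt0 Qp tp]] : exists p : {k : nat & vec R k},
    [/\ (0 < projT1 p)%N, Qlim (projT2 p) & forall q, target j = Some q -> q = p].
  case E: (target j) => [p|].
    by have [] := target_Qlim E; exists p; split=> // q [<-].
  by exists (existT _ 1%N (vquot (fun _ => ord0) v : vec R 1)); split=> //; exact: Qlim_vquot.
have [x [Qx xv xp]] := Qlim_extend p_gt0 Qv Qp.
exists (existT _ (d + projT1 p)%N (exist _ x Qx)); split=> /=.
  by split=> //; rewrite -{1}[d]addn0 ltn_add2l.
by move=> q /tp ->.
Qed.

Definition stage0 : stage := existT _ 0%N (cid (exists_Qlim (expn_gt0 2 0))).

Fixpoint stages (j : nat) : stage :=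
  if j is j'.+1 then projT1 (cid (exists_next_stage j' (stages j'))) else stage0.

Definition level j := depth (stages j).
Definition chi j : vec R (2 ^ level j) := stage_vec (stages j).
Arguments chi : clear implicits.

Lemma Qlim_chi j : Qlim (chi j).
Proof. exact: proj2_sig (projT2 (stages j)). Qed.

Lemma stages_refine j : refines (stages j) (stages j.+1).
Proof. exact: (projT2 (cid (exists_next_stage j (stages j)))).1. Qed.

Lemma stages_cover j p : target j = Some p -> covers (stages j.+1) p.
Proof. exact: (projT2 (cid (exists_next_stage j (stages j)))).2. Qed.

Lemma level_ge j : (j <= level j)%N.
Proof. by elim: j => [|j IH] //; apply: leq_ltn_trans IH (stages_refine j).1. Qed.

Lemma chi_trunc i j : (i <= j)%N ->
  (level i <= level j)%N /\ vquot (code_trunc (level i)) (chi j) = chi i.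
Proof.
pose rel i j := (level i <= level j)%N /\ vquot (code_trunc (level i)) (chi j) = chi i.
apply: (@homo_leq _ id rel) => [k|l k m [le_kl kl] [le_lm lm]|k].
- split=> //; rewrite -[RHS]vquot_id; apply: eq_vquot => r; exact: code_trunc_id.
- split; first exact: leq_trans le_kl le_lm.
  by rewrite -kl -lm vquot_comp; apply: eq_vquot => r; rewrite /= code_trunc_comp.
- by have [lt_k eq_k] := stages_refine k; split; [exact: ltnW | exact: eq_k].
Qed.

Lemma chi_trunc_set i j (T : {set 'I_(2 ^ level i)}) : (i <= j)%N ->
  chi j [set r | code_trunc (level i) r \in T]%SET = chi i T.
Proof. by move=> le_ij; have [_ <-] := chi_trunc le_ij. Qed.

(* Every clopen set is a cylinder of some level, so the default value 0 is only
   taken outside the algebra of clopen sets. *)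
Definition cantor_limit (S : set cantor_space) : R :=
  if pselect (exists jT : {j : nat & {set 'I_(2 ^ level j)}}, S = cylinder (projT2 jT))
    is left ex then chi _ (projT2 (projT1 (cid ex))) else 0.

Lemma cantor_limit_cylinder j (T : {set 'I_(2 ^ level j)}) :
  cantor_limit (cylinder T) = chi j T.
Proof.
rewrite /cantor_limit; case: pselect => [ex|]; last by case; exists (existT _ j T).
case: (cid ex) => [[i U] /= UT].
have [le_i _] := chi_trunc (leq_maxl i j); have [le_j _] := chi_trunc (leq_maxr i j).
rewrite -(chi_trunc_set U (leq_maxl i j)) -(chi_trunc_set T (leq_maxr i j)).
by congr (chi _ _); apply: cylinder_inj; rewrite -!cylinder_trunc.
Qed.

Lemma cantor_limit0 : is_setfunction cantor_limit.
Proof.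
rewrite /is_setfunction.
have -> : set0 = cylinder (finset.set0 : {set 'I_(2 ^ level 0)}).
  by apply/seteqP; split => x //=; rewrite /cylinder /= inE.
by rewrite cantor_limit_cylinder; apply: Qlim_set0; exact: Qlim_chi.
Qed.

Lemma Qk_cantor_limitP k v :
  @Qk R cantor_space (@clopen cantor_space) cantor_limit k v <->
  exists j (f : 'I_(2 ^ level j) -> 'I_k), v = vquot f (chi j).
Proof.
split=> [[F [clF ->]] | [j [f ->]]].
  have [D FD] := open_fibers_factor_prefix (fun i => (clF i).1).
  have [f Ff] := FD _ (level_ge D); exists D, f; apply/funext => A.
  by rewrite /quotient_of (funext Ff) preimage_prefix cantor_limit_cylinder.
exists (f \o prefix_code (level j)); split.
  move=> i; have -> : (f \o prefix_code (level j)) @^-1` [set i] = cylinder [set r | f r == i].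
    by apply/seteqP; split => x; rewrite /cylinder /= inE => /eqP.
  exact: clopen_cylinder.
by apply/funext => A; rewrite /quotient_of preimage_prefix cantor_limit_cylinder.
Qed.

Lemma chi_dense k (v : vec R k) e : (0 < k)%N -> Qlim v -> 0 < e ->
  exists j (f : 'I_(2 ^ level j) -> 'I_k), vdist_le (vquot f (chi j)) v e.
Proof.
move=> k_gt0 Qv e_gt0; have [j [x [tj xv]]] := target_dense k_gt0 Qv e_gt0.
by have [f fx] := stages_cover tj; exists j.+1, f; rewrite fx.
Qed.

Lemma quotient_converges_to_cantor_limit :
  quotient_converges_to phi (@clopen cantor_space) cantor_limit.
Proof.
move=> k k_gt0 e e_gt0; have e2_gt0 : 0 < e / 2 by rewrite divr_gt0.
have [Na QNa] := quot_near_Qlim k_gt0 e2_gt0; have [Nb QNb] := Qlim_unif k_gt0 e_gt0.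
exists (maxn Na Nb) => n len; split.
- move=> _ /QkP [F ->].
  have [x Qx Fx] := QNa n (leq_trans (leq_maxl _ _) len) F.
  have [j [f fx]] := chi_dense k_gt0 Qx e2_gt0.
  exists (vquot f (chi j)); first by apply/Qk_cantor_limitP; exists j, f.
  exact: vdist_half Fx (vdist_sym fx).
- move=> _ /Qk_cantor_limitP [j [f ->]].
  have [F Ff] := QNb _ (Qlim_vquot f (Qlim_chi j)) n (leq_trans (leq_maxr _ _) len).
  by exists (quot F) => //; apply/QkP; exists F.
Qed.

End LimitQuotients.

Theorem corollary3p3 (R : realType) (J : nat -> finType)
  (phi : forall n, set (J n) -> R) :
  (forall n, is_setfunction (phi n)) ->
  quotient_convergent phi ->
  exists psi : set cantor_space -> R,
    is_setfunction psi /\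
    quotient_converges_to phi (@clopen cantor_space) psi.
Proof.
move=> phi0 phi_qc; exists (cantor_limit phi_qc); split.
- exact: cantor_limit0.
- exact: quotient_converges_to_cantor_limit.
Qed.
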